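(* If an atomic flow $A$ is cycle-free and $A\to_{\mathsf c}^\star B$, then $B$ is cycle-free.
   Context: An atomic flow is a tuple $(V,E,\eta,up,lo)$: finite sets of vertices and edges, a labelling of vertices by interaction, cut, weakening, coweakening, contraction or cocontraction, and maps $up:E\to V\cup\{\top\}$, $lo:E\to V\cup\{\bot\}$. Upper edges of $\nu$: $lo(\epsilon)=\nu$; lower edges: $up(\epsilon)=\nu$. (Upper, lower) edge numbers: $(0,2)$ interaction, $(2,0)$ cut, $(0,1)$ weakening, $(1,0)$ coweakening, $(2,1)$ contraction, $(1,2)$ cocontraction; no directed cycles; there is $\pi:E\to\{+,-\}$ giving all edges of a (co)contraction the same sign and the two edges of an interaction/cut different signs. A path from $\nu$ to $\nu'$ is a sequence of edges $\epsilon_1,\dots,\epsilon_h$ with $lo(\epsilon_i)=up(\epsilon_{i+1})$, $up(\epsilon_1)=\nu$, $lo(\epsilon_h)=\nu'$; its reversal is a path from $\nu'$ to $\nu$. An $\mathsf{ai}$-path from $\nu$ to $\nu'$ is either a path from $\nu$ to $\nu'$ or a sequence $\epsilon_1,\dots,\epsilon_k,\epsilon_{k+1},\dots,\epsilon_h$ with $\epsilon_k\neq\epsilon_{k+1}$ such that, for some interaction or cut vertex $\nu''$, $\epsilon_1,\dots,\epsilon_k$ is an $\mathsf{ai}$-path from $\nu$ to $\nu''$ and $\epsilon_{k+1},\dots,\epsilon_h$ is an $\mathsf{ai}$-path from $\nu''$ to $\nu'$. An $\mathsf{ai}$-cycle is an $\mathsf{ai}$-path from a vertex to itself in which no edge appears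 twice. A flow is cycle-free if it has no $\mathsf{ai}$-cycle. $\to_{\mathsf c}^\star$ is the reflexive-transitive closure of $\to_{\mathsf c}$, where $A\to_{\mathsf c}B$ means $B$ results from $A$ by one of these subgraph replacements: (c1) a contraction with upper edges $\epsilon_1,\epsilon_2$ whose lower edge is an upper edge of a cut with other upper edge $\epsilon_3$: replace by a new cocontraction with upper edge $\epsilon_3$ and new lower edges $\delta_1,\delta_2$, and two new cuts with upper edges $\{\epsilon_1,\delta_1\}$ and $\{\epsilon_2,\delta_2\}$; (c2) an interaction with lower edges $\epsilon_3,\epsilon_4$ where $\epsilon_4$ is the upper edge of a cocontraction with lower edges $\epsilon_1,\epsilon_2$: replace by a new contraction with lower edge $\epsilon_3$ and new upper edges $\delta_1,\delta_2$, and two new interactions with lower edges $\{\epsilon_1,\delta_1\}$ and $\{\epsilon_2,\delta_2\}$; (c3) a contraction with upper edges $\epsilon_1,\epsilon_2$ whose lower edge is the upper edge of a cocontraction with lower edges $\epsilon_3,\epsilon_4$: replace by cocontractions $\kappa_1,\kappa_2$ with upper edges $\epsilon_1,\epsilon_2$, contractions $\gamma_3,\gamma_4$ with lower edges $\epsilon_3,\epsilon_4$, and four new edges, one from each $\kappa_i$ to each $\gamma_j$. *)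

From mathcomp Require Import all_boot.
Set Implicit Arguments. Unset Strict Implicit. Unset Printing Implicit Defensive.

Inductive kind := Int | Cut | Weak | Coweak | Contr | Cocontr.

(* (number of upper edges, number of lower edges) required for each label. *)
Definition arity (k : kind) : nat * nat :=
  match k with
  | Int => (0, 2) | Cut => (2, 0) | Weak => (0, 1) | Coweak => (1, 0)
  | Contr => (2, 1) | Cocontr => (1, 2)
  end.

(* An atomic flow: vertices and edges are named by natural numbers and listed
   (without repetition) in fV and fE.  fup e = None encodes up(e) = ⊤,
   flo e = None encodes lo(e) = ⊥. *)
Record flow := Flow {
  fV : seq nat;
  fE : seq nat;
  feta : nat -> kind;
  fup : nat -> option nat;
  flo : nat -> option nat }.

Definition down_path (A : flow) (v v' : nat) (s : seq nat) : Prop :=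
  match s with
  | [::] => False
  | e :: s' =>
      [/\ fup A e = Some v, flo A (last e s') = Some v',
          all (fun x => x \in fE A) s &
          path (fun x y => (flo A x != None) && (flo A x == fup A y)) e s']
  end.

Definition flow_path (A : flow) (v v' : nat) (s : seq nat) : Prop :=
  down_path A v v' s \/ down_path A v' v (rev s).

Inductive ai_path (A : flow) : nat -> nat -> seq nat -> Prop :=
  | ai_base v v' s : flow_path A v v' s -> ai_path A v v' s
  | ai_join v w v' s1 s2 :
      ai_path A v w s1 -> ai_path A w v' s2 ->
      (feta A w = Int \/ feta A w = Cut) -> w \in fV A ->
      last 0 s1 <> head 0 s2 ->
      ai_path A v v' (s1 ++ s2).

Definition ai_cycle (A : flow) (v : nat) (s : seq nat) : Prop :=
  v \in fV A /\ ai_path A v v s /\ uniq s.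

Definition cycle_free (A : flow) : Prop := ~ exists v s, ai_cycle A v s.

Definition incident (A : flow) (v e : nat) : bool :=
  (e \in fE A) && ((flo A e == Some v) || (fup A e == Some v)).

Definition is_flow (A : flow) : Prop :=
  [/\ uniq (fV A), uniq (fE A),
      (forall e v, e \in fE A -> fup A e = Some v -> v \in fV A),
      (forall e v, e \in fE A -> flo A e = Some v -> v \in fV A) &
      [/\ (forall v, v \in fV A ->
             (count (fun e => flo A e == Some v) (fE A),
              count (fun e => fup A e == Some v) (fE A)) = arity (feta A v)),
          ~ (exists v s, down_path A v v s) &
          exists pi : nat -> bool, forall v, v \in fV A ->
            ((feta A v = Contr \/ feta A v = Cocontr) ->
               forall e e', incident A v e -> incident A v e' -> pi e = pi e') /\
            ((feta A v = Int \/ feta A v = Cut) ->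
               forall e e', incident A v e -> incident A v e' -> e != e' ->
               pi e != pi e')]].

(* Common frame of a subgraph replacement: vertices rV and edges rE of A are
   removed, new vertices nV and new edges nE are added (new names are pairwise
   distinct and distinct from the names of the kept vertices/edges), and the
   labels of kept vertices are unchanged. *)
Definition frame (A B : flow) (rV rE nV nE : seq nat) : Prop :=
  [/\ uniq nV, uniq nE,
      all (fun v => (v \notin fV A) || (v \in rV)) nV,
      all (fun e => (e \notin fE A) || (e \in rE)) nE &
      [/\ uniq (fV B), uniq (fE B),
          (forall v, (v \in fV B) = ((v \in fV A) && (v \notin rV)) || (v \in nV)),
          (forall e, (e \in fE B) = ((e \in fE A) && (e \notin rE)) || (e \in nE)) &
          (forall v, v \in fV A -> v \notin rV -> feta B v = feta A v)]].

Definition step_c1 (A B : flow) : Prop :=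
  exists gam kap e1 e2 e e3 nu k1 k2 d1 d2 : nat,
    [/\ gam \in fV A, feta A gam = Contr, kap \in fV A, feta A kap = Cut &
        [/\ e1 \in fE A, e2 \in fE A, e \in fE A, e3 \in fE A & e1 != e2 ]] /\
    [/\ flo A e1 = Some gam, flo A e2 = Some gam, fup A e = Some gam,
        flo A e = Some kap & (e3 != e /\ flo A e3 = Some kap)] /\
    frame A B [:: gam; kap] [:: e] [:: nu; k1; k2] [:: d1; d2] /\
    [/\ feta B nu = Cocontr, feta B k1 = Cut & feta B k2 = Cut] /\
    (forall x, x \in fE B ->
       fup B x = (if x == d1 then Some nu else if x == d2 then Some nu
                  else fup A x) /\
       flo B x = (if x == d1 then Some k1 else if x == d2 then Some k2
                  else if x == e1 then Some k1 else if x == e2 then Some k2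
                  else if x == e3 then Some nu else flo A x)).

Definition step_c2 (A B : flow) : Prop :=
  exists iota kap e3 e4 e1 e2 gam i1 i2 d1 d2 : nat,
    [/\ iota \in fV A, feta A iota = Int, kap \in fV A, feta A kap = Cocontr &
        [/\ e1 \in fE A, e2 \in fE A, e3 \in fE A, e4 \in fE A & e3 != e4 ]] /\
    [/\ fup A e3 = Some iota, fup A e4 = Some iota, flo A e4 = Some kap,
        fup A e1 = Some kap & (fup A e2 = Some kap /\ e1 != e2)] /\
    frame A B [:: iota; kap] [:: e4] [:: gam; i1; i2] [:: d1; d2] /\
    [/\ feta B gam = Contr, feta B i1 = Int & feta B i2 = Int] /\
    (forall x, x \in fE B ->
       flo B x = (if x == d1 then Some gam else if x == d2 then Some gam
                  else flo A x) /\
       fup B x = (if x == d1 then Some i1 else if x == d2 then Some i2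
                  else if x == e1 then Some i1 else if x == e2 then Some i2
                  else if x == e3 then Some gam else fup A x)).

Definition step_c3 (A B : flow) : Prop :=
  exists gam kap e1 e2 e e3 e4 k1 k2 g3 g4 d13 d14 d23 d24 : nat,
    [/\ gam \in fV A, feta A gam = Contr, kap \in fV A, feta A kap = Cocontr &
        [/\ e1 \in fE A, e2 \in fE A, e \in fE A, e3 \in fE A & e4 \in fE A]] /\
    [/\ flo A e1 = Some gam, flo A e2 = Some gam, e1 != e2, fup A e = Some gam &
        [/\ flo A e = Some kap, fup A e3 = Some kap, fup A e4 = Some kap & e3 != e4]] /\
    frame A B [:: gam; kap] [:: e] [:: k1; k2; g3; g4] [:: d13; d14; d23; d24] /\
    [/\ feta B k1 = Cocontr, feta B k2 = Cocontr, feta B g3 = Contr &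
        feta B g4 = Contr] /\
    (forall x, x \in fE B ->
       fup B x = (if x == d13 then Some k1 else if x == d14 then Some k1
                  else if x == d23 then Some k2 else if x == d24 then Some k2
                  else if x == e3 then Some g3 else if x == e4 then Some g4
                  else fup A x) /\
       flo B x = (if x == d13 then Some g3 else if x == d14 then Some g4
                  else if x == d23 then Some g3 else if x == d24 then Some g4
                  else if x == e1 then Some k1 else if x == e2 then Some k2
                  else flo A x)).

Definition step_c (A B : flow) : Prop := step_c1 A B \/ step_c2 A B \/ step_c3 A B.

Inductive steps_c : flow -> flow -> Prop :=
  | steps_refl A : steps_c A A
  | steps_cons A B C : step_c A B -> steps_c B C -> steps_c A C.

From mathcomp Require Import all_boot zify.
Set Implicit Arguments. Unset Strict Implicit. Unset Printing Implicit Defensive.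

(* Follow a flow along darts, i.e. edges with a direction of traversal. An
   ai-path is a walk of darts that may reverse its direction only at an
   interaction or cut vertex, and only when passing to another edge; a closed
   walk contains an ai-cycle, since a repeated edge lets one cut out a shorter
   closed walk. Each rewrite (c1) or (c3) comes with a map from the vertices and
   darts of B back to A that respects endpoints and turns: a new vertex goes to
   the removed vertex it stands for, a dart along a new edge goes to the removed
   edge (reversed in (c1)), and every other dart stays put. It sends an ai-cycle
   of B to a closed walk of A, hence to an ai-cycle of A. Step (c2) is (c1)
   turned upside down. To know the neighbourhoods of the rewritten vertices, we
   carry along the invariant that every vertex has exactly the numbers of upper
   and lower edges prescribed by its label. *)

Notation dart := (nat * bool)%type.

Definition flip (p : dart) : dart := (p.1, ~~ p.2).

(* The dart [(x, true)] runs down the edge [x], from [fup x] to [flo x]. *)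
Definition src (F : flow) (p : dart) := if p.2 then fup F p.1 else flo F p.1.
Definition tgt (F : flow) (p : dart) := if p.2 then flo F p.1 else fup F p.1.

Definition ic_kind (k : kind) := match k with Int | Cut => true | _ => false end.

Definition turn_at (F : flow) (w : nat) (p q : dart) :=
  (p.2 == q.2) || [&& w \in fV F, ic_kind (feta F w) & p.1 != q.1].

Definition turn (F : flow) (p q : dart) :=
  if tgt F p is Some w then (src F q == Some w) && turn_at F w p q else false.

Definition walk (F : flow) (v v' : nat) (l : seq dart) :=
  if l is p :: l' then
    [/\ src F p = Some v, tgt F (last p l') = Some v',
        all (fun q => q.1 \in fE F) l & path (turn F) p l']
  else False.

Definition ends_in (F : flow) :=
  forall p v, p.1 \in fE F -> tgt F p = Some v -> v \in fV F.

Lemma flipK : involutive flip.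
Proof. by case=> x []. Qed.

Lemma src_flip F p : src F (flip p) = tgt F p.
Proof. by case: p => x []. Qed.

Lemma tgt_flip F p : tgt F (flip p) = src F p.
Proof. by case: p => x []. Qed.

Lemma turnP F p q :
  reflect (exists2 w, tgt F p = Some w & src F q = Some w /\ turn_at F w p q)
          (turn F p q).
Proof.
rewrite /turn; case: (tgt F p) => [w|]; last by constructor=> -[].
apply: (iffP andP) => [[/eqP Hq Hpq]|[_ [<-] [-> Hpq]]]; first by exists w.
by rewrite eqxx.
Qed.

Lemma turn_at_flip F w p q : turn_at F w (flip q) (flip p) = turn_at F w p q.
Proof.
by rewrite /turn_at /= eq_sym; case: (p.2); case: (q.2); rewrite //= eq_sym.
Qed.

Lemma turn_flip F p q : turn F (flip q) (flip p) = turn F p q.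
Proof.
apply/turnP/turnP=> -[w Hp [Hq Hpq]]; exists w;
  by rewrite ?tgt_flip ?src_flip ?turn_at_flip in Hp Hq Hpq *.
Qed.

Lemma last_rev_belast (T : Type) (x : T) s : last (last x s) (rev (belast x s)) = x.
Proof. by elim: s x => // y s IH x; rewrite /= rev_cons last_rcons. Qed.

Lemma walk_rev F v v' l : walk F v v' l -> walk F v' v (rev (map flip l)).
Proof.
case: l => // p l [Hs Ht Hl Hp]; rewrite lastI map_rcons rev_rcons /=.
rewrite -last_map -belast_map; split.
- by rewrite last_map src_flip.
- by rewrite last_rev_belast tgt_flip.
- rewrite /= all_rev belast_map all_map.
  move: Hl; rewrite lastI all_rcons => /andP[-> /allP Hl].
  by apply/allP => q /Hl.
rewrite rev_path path_map; apply: sub_path Hp => a b /=.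
by rewrite turn_flip.
Qed.

Lemma walk_cat F v v' p1 l1 p2 l2 :
  walk F v v' (p1 :: l1 ++ p2 :: l2) <->
  exists2 w, walk F v w (p1 :: l1) /\ walk F w v' (p2 :: l2) & turn F (last p1 l1) p2.
Proof.
rewrite /walk last_cat /= all_cat /= cat_path /=; split.
  case=> Hs Ht /and3P[H1 H2 /andP[H3 H4]] /and3P[Hp1 Hturn Hp2].
  have /turnP[w Hw [Hw' _]] := Hturn.
  by exists w; first by split; split; rewrite ?H1 ?H2 ?H3 ?H4.
case=> w [[Hs Hw /andP[H1 H2] Hp1] [Hw' Ht /andP[H3 H4] Hp2]] Hturn.
by split; rewrite ?H1 ?H2 ?H3 ?H4 ?Hp1 ?Hp2 ?Hturn.
Qed.

Definition down (x : nat) : dart := (x, true).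

Lemma down_pathE F v v' s : down_path F v v' s <-> walk F v v' (map down s).
Proof.
have E : relpre down (turn F) =2 (fun x y => (flo F x != None) && (flo F x == fup F y)).
  move=> a b; rewrite /turn /turn_at /tgt /src /=.
  by case: (flo F a) => [w|] //=; rewrite andbT eq_sym.
by case: s => [|x s] //=; rewrite last_map path_map all_map (eq_path E).
Qed.

Lemma map_fst_pair (b : bool) (s : seq nat) : map fst [seq (x, b) | x <- s] = s.
Proof. by elim: s => //= x s ->. Qed.

Lemma map_fst_flip l : map fst (map flip l) = map fst l.
Proof. by elim: l => //= p l ->. Qed.

Lemma walk_flow_path F v v' b s :
  walk F v v' [seq (x, b) | x <- s] -> flow_path F v v' s.
Proof.
case: b => W; first by left; apply/down_pathE.
right; apply/down_pathE; move/walk_rev: W.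
by rewrite map_rev -map_comp.
Qed.

Lemma ic_kind_cases k : ic_kind k -> k = Int \/ k = Cut.
Proof. by case: k; auto. Qed.

Lemma walk_of_ai_path F v v' s :
  ai_path F v v' s -> exists2 l, walk F v v' l & map fst l = s.
Proof.
elim=> {v v' s} [v v' s [W|W] | v w v' s1 s2 _ [l1 W1 <-] _ [l2 W2 <-] Hw Vw Hl].
- by exists (map down s); [apply/down_pathE | rewrite map_fst_pair].
- exists (rev (map flip (map down (rev s)))); first exact/walk_rev/down_pathE.
  by rewrite map_rev map_fst_flip map_fst_pair revK.
case: l1 W1 Hl => [[]|p1 m1] W1 Hl; case: l2 W2 Hl => [[]|p2 m2] W2 Hl.
exists (p1 :: m1 ++ p2 :: m2); last by rewrite /= map_cat.
apply/walk_cat; exists w => //; apply/turnP; exists w; first by case: W1.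
split; first by case: W2.
apply/orP; right; rewrite Vw; case: Hw => -> //=.
all: by apply/eqP; rewrite -(last_map fst).
Qed.

Lemma all_snd_pair b l :
  all (fun q : dart => q.2 == b) l -> l = [seq (x, b) | x <- map fst l].
Proof. by elim: l => //= -[x c] l IH /andP[/eqP /= -> /IH <-]. Qed.

Lemma ai_path_of_walk F v v' l : walk F v v' l -> ai_path F v v' (map fst l).
Proof.
move: {2}(size l) (leqnn (size l)) => n.
elim: n l v v' => [|n IH] [|p l] v v' //= Hn W.
have [Hb|Hnb] := boolP (has (fun q : dart => q.2 != p.2) l); last first.
  apply: ai_base; apply: (@walk_flow_path _ _ _ p.2).
  rewrite -[_ :: _]/(map fst (p :: l)) -all_snd_pair //= eqxx.
  by move: Hnb; rewrite -all_predC; apply: sub_all => q /negPn.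
move: Hn W; case: (split_find Hb) => q m1 m2 Hq Hm1; rewrite cat_rcons.
have Hlast : (last p m1).2 = p.2.
  have : last p m1 \in p :: m1 by apply: mem_last.
  rewrite inE => /predU1P[-> //|]; move: Hm1; rewrite -all_predC => /allP Hm1.
  by move/Hm1/negPn/eqP.
move=> Hn /walk_cat[w [W1 W2] /turnP[w' Hw' [Hq' /orP[Hd|/and3P[Vw Kw Hne]]]]].
  by rewrite Hlast eq_sym (negbTE Hq) in Hd.
have Ew : w' = w by case: W2; rewrite Hq' => -[].
subst w'; rewrite map_cat -cat_cons.
apply: ai_join (IH _ _ _ _ W1) (IH _ _ _ _ W2) _ Vw _.
- by move: Hn; rewrite /= size_cat /=; lia.
- by move: Hn; rewrite /= size_cat /=; lia.
- exact: ic_kind_cases.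
- by rewrite /= (last_map fst m1 p); apply/eqP.
Qed.

Lemma walk_suffix F v v' l p m : walk F v v' (l ++ p :: m) -> exists w, walk F w v' (p :: m).
Proof.
case: l => [|q l] W; first by exists v.
by case/walk_cat: W => w [_ W] _; exists w.
Qed.

Lemma not_uniq_split (T : eqType) (l : seq (T * bool)) : ~~ uniq (map fst l) ->
  exists a p b q c, l = a ++ p :: b ++ q :: c /\ p.1 = q.1.
Proof.
elim: l => //= p l IH; rewrite negb_and negbK => /orP[/mapP[q Hq Eq]|/IH].
  by case/splitPr: Hq => b c; exists [::], p, b, q, c.
by case=> a [p' [b [q [c [-> E]]]]]; exists (p :: a), p', b, q, c.
Qed.

Lemma walk_shorten F v l : walk F v v l -> ~~ uniq (map fst l) ->
  exists u l', walk F u u l' /\ size l' < size l.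
Proof.
move=> W /not_uniq_split[a [[x b] [m [[y c] [m' [El /= Exy]]]]]]; subst l y.
have [w /walk_cat[w' [W1 _] /turnP[u Hu [Hsrc Hturn]]]] := walk_suffix W.
have Ew' : w' = u by case: W1 => _; rewrite Hu => -[].
subst w'; have [Ebc|Nbc] := eqVneq b c.
  subst c; have Ew : w = u by case: W1; rewrite Hsrc => -[].
  subst w; exists u, ((x, b) :: m); split => //.
  by rewrite /= !size_cat /= size_cat /=; lia.
case: m W1 Hu Hturn {W} => [|r m] W1 Hu Hturn.
  by move: Hturn; rewrite /turn_at /= eqxx (negbTE Nbc) !andbF.
have Ec : c = ~~ b by move: Nbc; case: (b); case: (c).
have [z [Wx Wr] _] := iffLR (@walk_cat F w u (x, b) [::] r m) W1.
have Hz : tgt F (x, b) = Some z by case: Wx.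
exists u, (r :: m); split; last by rewrite /= !size_cat /= size_cat /=; lia.
suff Ezu : z = u by rewrite Ezu in Wr.
by move: Hsrc; rewrite Ec -[(x, ~~ b)]/(flip (x, b)) src_flip Hz => -[].
Qed.

Lemma closed_walk_ai_cycle F v l : ends_in F -> walk F v v l -> exists u s, ai_cycle F u s.
Proof.
move=> HF; move: {2}(size l) (leqnn (size l)) => n.
elim: n l v => [|n IH] [|p l] v //= Hn W.
have [Hu|Hnu] := boolP (uniq (map fst (p :: l))).
  exists v, (map fst (p :: l)); split; last by split => //; apply: ai_path_of_walk.
  case: W => Hs _ /andP[Hp _] _; apply: (HF (flip p)) => //.
  by rewrite tgt_flip.
have [u [l' [W' Hl']]] := walk_shorten (W : walk F v v (p :: l)) Hnu.
by apply: (IH l' u) => //; move: Hn Hl' => /=; lia.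
Qed.

Definition turn_morphism (F G : flow) (f : nat -> nat) (g : dart -> dart) :=
  (forall p, p.1 \in fE F ->
     [/\ (g p).1 \in fE G, src G (g p) = omap f (src F p) & tgt G (g p) = omap f (tgt F p)])
  /\ (forall p q, p.1 \in fE F -> q.1 \in fE F -> turn F p q -> turn G (g p) (g q)).

Lemma turn_morphism_cycle_free F G f g :
  ends_in G -> turn_morphism F G f g -> cycle_free G -> cycle_free F.
Proof.
move=> HG [Hend Hturn] CG [v [s [_ [Hs _]]]].
have [[|p l] W _] := walk_of_ai_path Hs; first by case: W.
apply: CG; apply: (@closed_walk_ai_cycle G (f v) (map g (p :: l)) HG).
case: W => Hsrc Htgt /allP Hl Hpath.
have [Hg1 Hg2 _] := Hend p (Hl p (mem_head _ _)).
split.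
- by rewrite Hg2 Hsrc.
- by rewrite last_map; have [_ _ ->] := Hend _ (Hl _ (mem_last _ _)); rewrite Htgt.
- by rewrite all_map; apply/allP => q /Hl /Hend[].
rewrite path_map; move: Hpath; apply: (sub_in_path (P := fun q : dart => q.1 \in fE F)).
  by move=> a b Ha Hb; apply: Hturn.
exact/allP.
Qed.

(* A dart arriving at a vertex downwards runs along one of its upper edges. *)
Definition dart_arity (D : seq dart) := (count (fun p => p.2) D, count (fun p => ~~ p.2) D).

Definition arity_correct (F : flow) :=
  ends_in F /\ forall v, v \in fV F -> exists2 D : seq dart,
    uniq D /\ dart_arity D = arity (feta F v) &
    forall p, (p \in D) = (p.1 \in fE F) && (tgt F p == Some v).

Lemma mem_pair (x : nat) (b b' : bool) (s : seq nat) :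
  ((x, b) \in [seq (y, b') | y <- s]) = (b == b') && (x \in s).
Proof. by elim: s => [|y s IH]; rewrite ?andbF // !inE IH xpair_eqE andb_orr andbC. Qed.

Lemma count_snd_pair (b : bool) (s : seq nat) (a : pred bool) :
  count (fun p : dart => a p.2) [seq (x, b) | x <- s] = a b * size s.
Proof. by elim: s => [|x s IH]; rewrite /= ?muln0 // IH mulnS. Qed.

Lemma is_flow_arity_correct F : is_flow F -> arity_correct F.
Proof.
case=> _ UE Hup Hlo [Har _ _]; split=> [[x []] v /= Hx|v Hv]; [exact: Hlo|exact: Hup|].
exists ([seq (x, true) | x <- fE F & flo F x == Some v] ++
        [seq (x, false) | x <- fE F & fup F x == Some v]); last first.
  by case=> x [] /=; rewrite mem_cat !mem_pair !mem_filter /= ?orbF andbC.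
split.
  rewrite cat_uniq !map_inj_uniq ?filter_uniq ?andbT //=; try by move=> ? ? [].
  by apply/hasPn => -[x b] /mapP[y _ [_ ->]]; rewrite mem_pair.
rewrite /dart_arity !count_cat !(count_snd_pair _ _ id) !(count_snd_pair _ _ negb).
by rewrite -(Har v Hv) !size_filter !mul1n !mul0n addn0 add0n.
Qed.

Lemma arity_correct_tgt F v S : arity_correct F -> v \in fV F -> uniq S ->
  size S = (arity (feta F v)).1 + (arity (feta F v)).2 ->
  (forall p, p \in S -> p.1 \in fE F /\ tgt F p = Some v) ->
  forall p, p.1 \in fE F -> tgt F p = Some v -> p \in S.
Proof.
case=> _ /(_ v) HD Hv US Hsize HS p Hp Htgt; have [D [UD HaD] HmemD] := HD Hv.
have SD : {subset S <= D}.
  by move=> q /HS[Hq Hqv]; rewrite HmemD Hq Hqv eqxx.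
have leDS : size D <= size S.
  by rewrite Hsize -HaD /dart_arity -(count_predC (fun p : dart => p.2) D).
have [_ ->] := uniq_min_size US SD leDS.
by rewrite HmemD Hp Htgt eqxx.
Qed.

Definition dual_kind (k : kind) : kind :=
  match k with
  | Int => Cut | Cut => Int | Weak => Coweak | Coweak => Weak
  | Contr => Cocontr | Cocontr => Contr
  end.

Definition dual (F : flow) : flow :=
  Flow (fV F) (fE F) (fun v => dual_kind (feta F v)) (flo F) (fup F).

(* [G] is [F] turned upside down. *)
Definition dual_pair (F G : flow) :=
  [/\ fV G = fV F, fE G = fE F, forall p, tgt G p = tgt F (flip p),
      forall v, ic_kind (feta G v) = ic_kind (feta F v) &
      forall v, arity (feta G v) = ((arity (feta F v)).2, (arity (feta F v)).1)].

Lemma dual_pairD F : dual_pair F (dual F).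
Proof. by split=> [||[x []]|v|v] //=; case: (feta F v). Qed.

Lemma dual_pairDV F : dual_pair (dual F) F.
Proof. by split=> [||[x []]|v|v] //=; case: (feta F v). Qed.

Section DualPair.
Variables F G : flow.
Hypothesis FG : dual_pair F G.

Lemma src_dual_pair p : src G p = src F (flip p).
Proof. by case: FG => _ _ Htgt _ _; rewrite -tgt_flip Htgt -src_flip flipK. Qed.

Lemma ends_in_dual_pair : ends_in F -> ends_in G.
Proof.
by case: FG => EV EE Htgt _ _ HF p v; rewrite EV EE Htgt; exact: (HF (flip p)).
Qed.

Lemma arity_correct_dual_pair : arity_correct F -> arity_correct G.
Proof.
case=> HF HD; split; first exact: ends_in_dual_pair.
case: FG => EV EE Htgt _ Har v; rewrite EV => /HD[D [UD HaD] HmemD].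
have flip_inj := can_inj flipK.
exists (map flip D); last by move=> p; rewrite -[p]flipK (mem_map flip_inj) HmemD EE Htgt flipK.
split; first by rewrite map_inj_uniq.
rewrite Har -HaD /dart_arity !count_map /=.
by congr (_, _); apply: eq_count => p /=; rewrite ?negbK.
Qed.

Lemma dual_pair_turn_morphism : turn_morphism G F id flip.
Proof.
have omap_id (o : option nat) : omap id o = o by case: o.
case: FG => EV EE Htgt Hic _; split=> [p Hp|p q Hp Hq].
  by rewrite !omap_id src_dual_pair Htgt -EE.
move/turnP=> [w Hw [Hq' Hpq]]; apply/turnP; exists w; rewrite -?Htgt ?flipK //.
split; first by rewrite -src_dual_pair.
by move: Hpq; rewrite /turn_at EV Hic /=; case: (p.2); case: (q.2).
Qed.

Lemma cycle_free_dual_pair : ends_in F -> cycle_free F -> cycle_free G.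
Proof. by move=> HF; apply: turn_morphism_cycle_free dual_pair_turn_morphism. Qed.

End DualPair.

Lemma uniq_fst_inj (T U : eqType) (s : seq (T * U)) a b b' :
  uniq (map fst s) -> (a, b) \in s -> (a, b') \in s -> b = b'.
Proof.
elim: s => //= -[x y] s IH /andP[Hx Us]; rewrite !inE !xpair_eqE.
have [Ea|Nax] := eqVneq a x; last by rewrite !andFb; apply: IH.
subst x.
have Hs c : (a, c) \in s -> a \in map fst s by move=> H; apply/mapP; exists (a, c).
by rewrite !andTb => /orP[/eqP-> | /Hs Ha] /orP[/eqP-> | /Hs Ha'] //; rewrite ?Ha ?Ha' in Hx.
Qed.

Section Frame.
Variables (A B : flow) (rV rE nV nE : seq nat).
Hypothesis AB : frame A B rV rE nV nE.

Lemma mem_fV_frame v : (v \in fV B) = (v \in fV A) && (v \notin rV) || (v \in nV).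
Proof. by case: AB => _ _ _ _ [_ _ -> _ _]. Qed.

Lemma mem_fE_frame x : (x \in fE B) = (x \in fE A) && (x \notin rE) || (x \in nE).
Proof. by case: AB => _ _ _ _ [_ _ _ -> _]. Qed.

Lemma feta_frame v : v \in fV A -> v \notin rV -> feta B v = feta A v.
Proof. by case: AB => _ _ _ _ [_ _ _ _ H]; apply: H. Qed.

Lemma new_vertex_fresh v : v \in nV -> (v \in fV A) && (v \notin rV) = false.
Proof.
by case: AB => _ _ /allP H _ _ /H; case: (v \in fV A); case: (v \in rV).
Qed.

Lemma new_edge_removed x : x \in nE -> x \in fE A -> x \in rE.
Proof. by case: AB => _ _ _ /allP H _ /H; case: (x \in fE A); case: (x \in rE). Qed.

End Frame.

Section Replacement.
Variables (A B : flow) (rV rE nV nE : seq nat).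
Hypotheses (AB : frame A B rV rE nV nE) (arA : arity_correct A).

(* Each new
   vertex [w] is listed in [news] with the darts of [B] ending at it; these darts
   are the redirected ones. [f] and [g] send vertices and darts of [B] to [A]. *)
Variable news : seq (nat * seq dart).
Hypothesis nV_news : nV = map fst news.

Definition redirected (p : dart) := has (fun wD : nat * seq dart => p \in wD.2) news.

Variables (f : nat -> nat) (g : dart -> dart).
Hypothesis f_old : forall v, v \notin nV -> f v = v.
Hypothesis g_flip : forall p, g (flip p) = flip (g p).
Hypothesis news_tgt : forall w D p, (w, D) \in news -> p \in D ->
  [/\ p.1 \in fE B, tgt B p = Some w, (g p).1 \in fE A & tgt A (g p) = Some (f w)].
Hypothesis news_arity : forall w D, (w, D) \in news ->
  uniq D /\ dart_arity D = arity (feta B w).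
Hypothesis news_turn : forall w D p p', (w, D) \in news -> p \in D -> p' \in D ->
  turn_at B w p (flip p') -> turn_at A (f w) (g p) (g (flip p')).
Hypothesis unredirected_tgt : forall p, p.1 \in fE B -> ~~ redirected p ->
  [/\ p.1 \in fE A, p.1 \notin rE, g p = p & tgt B p = tgt A p].
Hypothesis tgt_removed_redirected : forall p r, p.1 \in fE A -> tgt A p = Some r -> r \in rV ->
  redirected p || (p.1 \in rE).
Hypothesis redirected_tgt_removed : forall p, p.1 \in fE A -> redirected p || (p.1 \in rE) ->
  exists2 r, r \in rV & tgt A p = Some r.

Lemma news_fun w D D' : (w, D) \in news -> (w, D') \in news -> D = D'.
Proof. by case: AB => UV _ _ _ _; rewrite nV_news in UV; apply: uniq_fst_inj. Qed.

Lemma redirected_tgt p :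
  redirected p -> exists w D, [/\ (w, D) \in news, p \in D & tgt B p = Some w].
Proof. by case/hasP=> -[w D] HwD Hp; exists w, D; have [] := news_tgt HwD Hp. Qed.

Lemma unredirected_old p w : p.1 \in fE B -> ~~ redirected p -> tgt B p = Some w ->
  [/\ w \in fV A, w \notin rV, p.1 \in fE A, g p = p & tgt A p = Some w].
Proof.
move=> Hp Hu Hw; have [HpA HpE Hg HtA] := unredirected_tgt Hp Hu.
rewrite HtA in Hw; split=> //; first exact: (proj1 arA p).
by apply: contraNN Hu => /(tgt_removed_redirected HpA Hw); rewrite (negbTE HpE) orbF.
Qed.

Lemma tgt_new p w D : (w, D) \in news -> p.1 \in fE B -> tgt B p = Some w -> p \in D.
Proof.
move=> HwD Hp Hw; have [/redirected_tgt[w' [D' [HwD' Hp' Hw']]]|Hu] := boolP (redirected p).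
  have Ew : w' = w by rewrite Hw in Hw'; case: Hw'.
  by subst w'; rewrite (news_fun HwD HwD').
have [HwA HwR _ _ _] := unredirected_old Hp Hu Hw.
have : w \in nV by rewrite nV_news; apply/mapP; exists (w, D).
by move/(new_vertex_fresh AB); rewrite HwA HwR.
Qed.

Lemma tgt_B_old p w : p.1 \in fE B -> tgt B p = Some w -> w \notin nV ->
  [/\ w \in fV A, w \notin rV, p.1 \in fE A, g p = p & tgt A p = Some w].
Proof.
move=> Hp Hw HwN; apply: unredirected_old => //.
apply: contraNN HwN => /redirected_tgt[w' [D [HwD _ Hw']]].
rewrite Hw in Hw'; case: Hw' => ->; rewrite nV_news; apply/mapP; exists (w', D) => //.
Qed.

Lemma tgt_A_old p w : p.1 \in fE A -> tgt A p = Some w -> w \notin rV ->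
  p.1 \in fE B /\ tgt B p = Some w.
Proof.
move=> Hp Hw HwR; have Hu : ~~ (redirected p || (p.1 \in rE)).
  by apply/negP => /(redirected_tgt_removed Hp)[r Hr]; rewrite Hw => -[Er]; rewrite Er Hr in HwR.
have HpB : p.1 \in fE B by rewrite (mem_fE_frame AB) Hp; move: Hu; rewrite negb_or => /andP[_ ->].
by move: Hu; rewrite negb_or => /andP[/(unredirected_tgt HpB)[_ _ _ ->]].
Qed.

Lemma ends_in_replace : ends_in B.
Proof.
move=> p w Hp Hw; rewrite (mem_fV_frame AB); have [HwN|HwN] := boolP (w \in nV).
  by rewrite orbT.
by have [-> -> _ _ _] := tgt_B_old Hp Hw HwN.
Qed.

Lemma arity_correct_replace : arity_correct B.
Proof.
split=> [|v]; first exact: ends_in_replace.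
have [HvN _|HvN] := boolP (v \in nV).
  move: HvN; rewrite nV_news => /mapP[[w D] HwD /= Ev]; subst w.
  exists D; first exact: news_arity.
  move=> p; apply/idP/andP => [Hp|[Hp /eqP Hv]]; last exact: tgt_new HwD Hp Hv.
  by have [-> -> _ _] := news_tgt HwD Hp.
rewrite (mem_fV_frame AB) (negbTE HvN) orbF => /andP[HvA HvR].
have [D HD HmemD] := proj2 arA v HvA; exists D; first by rewrite (feta_frame AB).
move=> p; rewrite HmemD; apply/andP/andP => -[Hp /eqP Hv].
  by have [-> ->] := tgt_A_old Hp Hv HvR.
by have [_ _ -> _ ->] := tgt_B_old Hp Hv HvN.
Qed.

Lemma tgt_replace p : p.1 \in fE B -> (g p).1 \in fE A /\ tgt A (g p) = omap f (tgt B p).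
Proof.
move=> Hp; case Hw: (tgt B p) => [w|].
  have [HwN|HwN] := boolP (w \in nV).
    move: HwN; rewrite nV_news => /mapP[[w' D] HwD /= Ew]; subst w'.
    by have [_ _ -> ->] := news_tgt HwD (tgt_new HwD Hp Hw).
  by have [_ _ HpA -> ->] := tgt_B_old Hp Hw HwN; rewrite /= f_old.
have [/redirected_tgt[w [D [_ _ Hw']]]|Hu] := boolP (redirected p); first by rewrite Hw in Hw'.
by have [HpA _ -> <-] := unredirected_tgt Hp Hu.
Qed.

Lemma replace_turn_morphism : turn_morphism B A f g.
Proof.
have src_replace p : p.1 \in fE B -> src A (g p) = omap f (src B p).
  by move=> Hp; rewrite -!tgt_flip -g_flip; have [] := tgt_replace (p := flip p) Hp.
split=> [p Hp|p q Hp Hq /turnP[w Hpw [Hqw Hpq]]].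
  by have [? ?] := tgt_replace Hp; split; rewrite ?src_replace.
apply/turnP; exists (f w); first by have [_ ->] := tgt_replace Hp; rewrite Hpw.
split; first by rewrite src_replace ?Hqw.
have Hfq : tgt B (flip q) = Some w by rewrite tgt_flip.
have [HwN|HwN] := boolP (w \in nV).
  move: HwN; rewrite nV_news => /mapP[[w' D] HwD /= Ew]; subst w'.
  rewrite -[q]flipK; apply: (news_turn HwD (tgt_new HwD Hp Hpw) (tgt_new (p := flip q) HwD Hq Hfq)).
  by rewrite flipK.
have [HwA HwR _ Hgp _] := tgt_B_old Hp Hpw HwN.
have [_ _ _ Hgq _] := tgt_B_old (p := flip q) Hq Hfq HwN.
have -> : g q = q by rewrite -[q]flipK g_flip Hgq.
by move: Hpq; rewrite Hgp f_old // /turn_at (mem_fV_frame AB) HwA HwR (feta_frame AB).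
Qed.

Lemma replace_correct : arity_correct B /\ (cycle_free A -> cycle_free B).
Proof.
split; first exact: arity_correct_replace.
exact: turn_morphism_cycle_free (proj1 arA) replace_turn_morphism.
Qed.

End Replacement.

Section StepC1.
Variables (A B : flow) (gam kap e1 e2 e e3 nu k1 k2 d1 d2 : nat).
Hypothesis arA : arity_correct A.
Hypothesis HV : [/\ gam \in fV A, feta A gam = Contr, kap \in fV A, feta A kap = Cut &
  [/\ e1 \in fE A, e2 \in fE A, e \in fE A, e3 \in fE A & e1 != e2]].
Hypothesis HE : [/\ flo A e1 = Some gam, flo A e2 = Some gam, fup A e = Some gam,
  flo A e = Some kap & (e3 != e /\ flo A e3 = Some kap)].
Hypothesis AB : frame A B [:: gam; kap] [:: e] [:: nu; k1; k2] [:: d1; d2].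
Hypothesis HL : [/\ feta B nu = Cocontr, feta B k1 = Cut & feta B k2 = Cut].
Hypothesis HB : forall x, x \in fE B ->
  fup B x = (if x == d1 then Some nu else if x == d2 then Some nu else fup A x) /\
  flo B x = (if x == d1 then Some k1 else if x == d2 then Some k2
             else if x == e1 then Some k1 else if x == e2 then Some k2
             else if x == e3 then Some nu else flo A x).

Definition news_c1 : seq (nat * seq dart) :=
  [:: (nu, [:: (e3, true); (d1, false); (d2, false)]);
      (k1, [:: (e1, true); (d1, true)]); (k2, [:: (e2, true); (d2, true)])].

(* The new cocontraction [nu] stands for the cut [kap], the new cuts [k1] and [k2]
   for the contraction [gam], and a dart along [d1] or [d2] for [e] traversed
   the other way. *)
Definition vmap_c1 (v : nat) := if v == nu then kap else if (v == k1) || (v == k2) then gam else v.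

Definition dmap_c1 (p : dart) := if (p.1 == d1) || (p.1 == d2) then (e, ~~ p.2) else p.

Lemma tgt_e_c1 b : tgt A (e, b) = Some (if b then kap else gam).
Proof. by case: HE => _ _ Hu Hl _; case: b. Qed.

Lemma neq_c1 :
  ((d1 == d2) = false) * ((d2 == d1) = false) *
  ((e1 == d1) = false) * ((e1 == d2) = false) * ((e2 == d1) = false) *
  ((e2 == d2) = false) * ((e3 == d1) = false) * ((e3 == d2) = false) *
  ((e1 == e2) = false) * ((e2 == e1) = false) * ((e3 == e1) = false) * ((e3 == e2) = false) *
  ((e1 == e) = false) * ((e2 == e) = false) * ((e3 == e) = false) * ((e == e3) = false) *
  ((k1 == nu) = false) * ((k2 == nu) = false).
Proof.
have [_ Hg _ Hk [He1 He2 _ He3 N12]] := HV.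
have [F1 F2 _ Fe [N3 F3]] := HE.
have Ngk : gam != kap by apply/eqP => Egk; rewrite Egk Hk in Hg.
have neq_flo x y vx vy : flo A x = Some vx -> flo A y = Some vy -> vx != vy -> x != y.
  by move=> Hx Hy; apply: contraNneq => Exy; rewrite -Exy Hx in Hy; case: Hy => ->.
have N1 : e1 != e by apply: neq_flo F1 Fe Ngk.
have N2 : e2 != e by apply: neq_flo F2 Fe Ngk.
have N31 : e3 != e1 by apply: neq_flo F3 F1 _; rewrite eq_sym.
have N32 : e3 != e2 by apply: neq_flo F3 F2 _; rewrite eq_sym.
have neq_d x : x \in fE A -> x != e -> (x != d1) && (x != d2).
  move=> Hx Nx; rewrite -negb_or; apply: contra Nx => Hd.
  by have := @new_edge_removed _ _ _ _ _ _ AB x; rewrite !inE Hd Hx; apply.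
have [_ /= /andP[Nd _] _ _ _] := AB.
have [/= /andP[Nn _] _ _ _ _] := AB.
move: Nd Nn; rewrite !inE !negb_or => Nd /andP[Nn1 Nn2].
have /andP[D11 D12] := neq_d _ He1 N1; have /andP[D21 D22] := neq_d _ He2 N2.
have /andP[D31 D32] := neq_d _ He3 N3.
by do !split; apply/negbTE; first [done | rewrite eq_sym].
Qed.

Lemma tgt_B_c1 p : p.1 \in fE B -> tgt B p =
  if p.2 then
    if p.1 == d1 then Some k1 else if p.1 == d2 then Some k2
    else if p.1 == e1 then Some k1 else if p.1 == e2 then Some k2
    else if p.1 == e3 then Some nu else flo A p.1
  else if p.1 == d1 then Some nu else if p.1 == d2 then Some nu else fup A p.1.
Proof. by case: p => x [] /HB[]. Qed.

Lemma edges_B_c1 :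
  [/\ e1 \in fE B, e2 \in fE B, e3 \in fE B, d1 \in fE B & d2 \in fE B].
Proof.
have [_ _ _ _ [He1 He2 _ He3 _]] := HV.
by rewrite !(mem_fE_frame AB) !inE He1 He2 He3 !neq_c1 !eqxx !orbT.
Qed.

Lemma news_tgt_c1 w D p : (w, D) \in news_c1 -> p \in D ->
  [/\ p.1 \in fE B, tgt B p = Some w, (dmap_c1 p).1 \in fE A &
      tgt A (dmap_c1 p) = Some (vmap_c1 w)].
Proof.
have [_ _ _ _ [He1 He2 He He3 _]] := HV; have [F1 F2 _ _ [_ F3]] := HE.
have [B1 B2 B3 Bd1 Bd2] := edges_B_c1.
rewrite !inE => /or3P[] /eqP[-> ->]; rewrite !inE.
- by case/or3P=> /eqP->; split; rewrite ?tgt_B_c1 /dmap_c1 /vmap_c1 //= ?eqxx ?neq_c1 ?tgt_e_c1.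
- by case/orP=> /eqP->; split; rewrite ?tgt_B_c1 /dmap_c1 /vmap_c1 //= ?eqxx ?neq_c1 ?tgt_e_c1.
- by case/orP=> /eqP->; split;
    rewrite ?tgt_B_c1 /dmap_c1 /vmap_c1 //= ?eqxx ?neq_c1 ?tgt_e_c1 ?orbT.
Qed.

Lemma news_arity_c1 w D : (w, D) \in news_c1 -> uniq D /\ dart_arity D = arity (feta B w).
Proof.
have [Ln Lk1 Lk2] := HL.
rewrite !inE => /or3P[] /eqP[-> ->];
  by rewrite ?Ln ?Lk1 ?Lk2 /dart_arity /= !inE !xpair_eqE ?neq_c1 ?andbF.
Qed.

Lemma news_turn_c1 w D p p' : (w, D) \in news_c1 -> p \in D -> p' \in D ->
  turn_at B w p (flip p') -> turn_at A (vmap_c1 w) (dmap_c1 p) (dmap_c1 (flip p')).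
Proof.
have [_ _ Hk Lk _] := HV; have [Ln _ _] := HL.
rewrite !inE => /or3P[] /eqP[-> ->]; rewrite !inE.
- by case/or3P=> /eqP-> /or3P[] /eqP->;
    rewrite /turn_at /dmap_c1 /vmap_c1 /= ?eqxx ?neq_c1 ?Ln ?Lk ?Hk ?andbF.
- by case/orP=> /eqP-> /orP[] /eqP->;
    rewrite /turn_at /dmap_c1 /vmap_c1 /= ?eqxx ?neq_c1 ?andbF.
- by case/orP=> /eqP-> /orP[] /eqP->;
    rewrite /turn_at /dmap_c1 /vmap_c1 /= ?eqxx ?neq_c1 ?orbT ?andbF.
Qed.

Lemma unredirected_c1 p : p.1 \in fE B -> ~~ redirected news_c1 p ->
  [/\ p.1 \in fE A, p.1 \notin [:: e], dmap_c1 p = p & tgt B p = tgt A p].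
Proof.
case: p => x b /= HxB Hu.
have [n1 n2] : (x == d1) = false /\ (x == d2) = false.
  by split; apply: (contraNF _ Hu) => /eqP->; case: (b); rewrite /redirected /= !inE eqxx ?orbT.
move: (HxB); rewrite (mem_fE_frame AB) !inE n1 n2 !orbF => /andP[-> ->].
split=> //; first by rewrite /dmap_c1 /= n1 n2.
rewrite tgt_B_c1 //= n1 n2; case: b Hu => //= Hu.
have [n3 n4 n5] : [/\ (x == e1) = false, (x == e2) = false & (x == e3) = false].
  by split; apply: (contraNF _ Hu) => /eqP->; rewrite /redirected /= !inE eqxx ?orbT.
by rewrite n3 n4 n5.
Qed.

Lemma tgt_removed_c1 p r : p.1 \in fE A -> tgt A p = Some r -> r \in [:: gam; kap] ->
  redirected news_c1 p || (p.1 \in [:: e]).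
Proof.
have [Hg Lg Hk Lk [He1 He2 He He3 _]] := HV; have [F1 F2 Fu Fl [_ F3]] := HE.
move=> Hp Hr; rewrite !inE => /orP[] /eqP Er; subst r.
  have : p \in [:: (e1, true); (e2, true); (e, false)].
    apply: arity_correct_tgt arA Hg _ _ _ p Hp Hr.
    - by rewrite /= !inE !xpair_eqE ?neq_c1.
    - by rewrite Lg.
    - by move=> q; rewrite !inE => /or3P[] /eqP->.
  by rewrite !inE => /or3P[] /eqP->; rewrite /redirected /= !inE ?eqxx ?orbT.
have : p \in [:: (e, true); (e3, true)].
  apply: arity_correct_tgt arA Hk _ _ _ p Hp Hr.
  - by rewrite /= !inE !xpair_eqE ?neq_c1.
  - by rewrite Lk.
  - by move=> q; rewrite !inE => /orP[] /eqP->.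
by rewrite !inE => /orP[] /eqP->; rewrite /redirected /= !inE ?eqxx ?orbT.
Qed.

Lemma redirected_tgt_c1 p : p.1 \in fE A -> redirected news_c1 p || (p.1 \in [:: e]) ->
  exists2 r, r \in [:: gam; kap] & tgt A p = Some r.
Proof.
have [F1 F2 _ _ [_ F3]] := HE.
have tgt_e b : exists2 r, r \in [:: gam; kap] & tgt A (e, b) = Some r.
  by rewrite tgt_e_c1; case: b; [exists kap|exists gam]; rewrite ?inE ?eqxx ?orbT.
have new_e y b : y \in [:: d1; d2] -> y \in fE A ->
    exists2 r, r \in [:: gam; kap] & tgt A (y, b) = Some r.
  by move=> Hy /(new_edge_removed AB Hy); rewrite inE => /eqP->.
case: p => x b Hx /orP[/hasP[[w D] HwD HxD]|]; last by rewrite inE /= => /eqP->.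
move: HwD HxD Hx; rewrite !inE => /or3P[] /eqP[_ ->]; rewrite !inE.
- by case/or3P=> /eqP[-> ->] Hx; [exists kap | apply: new_e..]; rewrite ?inE ?eqxx ?orbT.
- by case/orP=> /eqP[-> ->] Hx; [exists gam | apply: new_e]; rewrite ?inE ?eqxx ?orbT.
- by case/orP=> /eqP[-> ->] Hx; [exists gam | apply: new_e]; rewrite ?inE ?eqxx ?orbT.
Qed.

Lemma vmap_old_c1 v : v \notin [:: nu; k1; k2] -> vmap_c1 v = v.
Proof. by rewrite !inE !negb_or /vmap_c1 => /and3P[/negbTE-> /negbTE-> /negbTE->]. Qed.

Lemma dmap_flip_c1 p : dmap_c1 (flip p) = flip (dmap_c1 p).
Proof. by rewrite /dmap_c1 /=; case: ifP. Qed.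

Lemma c1_correct : arity_correct B /\ (cycle_free A -> cycle_free B).
Proof.
exact: (replace_correct (news := news_c1) AB arA (erefl _) vmap_old_c1 dmap_flip_c1
  news_tgt_c1 news_arity_c1 news_turn_c1 unredirected_c1 tgt_removed_c1 redirected_tgt_c1).
Qed.

End StepC1.

Lemma step_c1_correct A B : step_c1 A B -> arity_correct A ->
  arity_correct B /\ (cycle_free A -> cycle_free B).
Proof.
case=> gam [kap [e1 [e2 [e [e3 [nu [k1 [k2 [d1 [d2 [HV [HE [AB [HL HB]]]]]]]]]]]]]] arA.
exact: c1_correct arA HV HE AB HL HB.
Qed.

Section StepC3.
Variables (A B : flow) (gam kap e1 e2 e e3 e4 k1 k2 g3 g4 d13 d14 d23 d24 : nat).
Hypothesis arA : arity_correct A.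
Hypothesis HV : [/\ gam \in fV A, feta A gam = Contr, kap \in fV A, feta A kap = Cocontr &
  [/\ e1 \in fE A, e2 \in fE A, e \in fE A, e3 \in fE A & e4 \in fE A]].
Hypothesis HE : [/\ flo A e1 = Some gam, flo A e2 = Some gam, e1 != e2, fup A e = Some gam &
  [/\ flo A e = Some kap, fup A e3 = Some kap, fup A e4 = Some kap & e3 != e4]].
Hypothesis AB : frame A B [:: gam; kap] [:: e] [:: k1; k2; g3; g4] [:: d13; d14; d23; d24].
Hypothesis HL : [/\ feta B k1 = Cocontr, feta B k2 = Cocontr, feta B g3 = Contr &
  feta B g4 = Contr].
Hypothesis HB : forall x, x \in fE B ->
  fup B x = (if x == d13 then Some k1 else if x == d14 then Some k1
             else if x == d23 then Some k2 else if x == d24 then Some k2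
             else if x == e3 then Some g3 else if x == e4 then Some g4
             else fup A x) /\
  flo B x = (if x == d13 then Some g3 else if x == d14 then Some g4
             else if x == d23 then Some g3 else if x == d24 then Some g4
             else if x == e1 then Some k1 else if x == e2 then Some k2
             else flo A x).

Definition news_c3 : seq (nat * seq dart) :=
  [:: (k1, [:: (e1, true); (d13, false); (d14, false)]);
      (k2, [:: (e2, true); (d23, false); (d24, false)]);
      (g3, [:: (d13, true); (d23, true); (e3, false)]);
      (g4, [:: (d14, true); (d24, true); (e4, false)])].

(* The cocontractions [k1], [k2] stand for [gam], the contractions [g3], [g4] for
   [kap], and the new edges for [e]. *)
Definition vmap_c3 (v : nat) :=
  if (v == k1) || (v == k2) then gam else if (v == g3) || (v == g4) then kap else v.

Definition dmap_c3 (p : dart) := if p.1 \in [:: d13; d14; d23; d24] then (e, p.2) else p.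

Lemma tgt_e_c3 b : tgt A (e, b) = Some (if b then kap else gam).
Proof. by case: HE => _ _ _ Hu [Hl _ _ _]; case: b. Qed.

Lemma neq_c3 :
  ((d14 == d13) = false) * ((d23 == d13) = false) * ((d23 == d14) = false) *
  ((d24 == d13) = false) * ((d24 == d14) = false) * ((d24 == d23) = false) *
  ((d13 == d14) = false) * ((d13 == d23) = false) * ((d14 == d24) = false) *
  ((d23 == d24) = false) *
  ((e1 == d13) = false) * ((e1 == d14) = false) * ((e1 == d23) = false) * ((e1 == d24) = false) *
  ((e2 == d13) = false) * ((e2 == d14) = false) * ((e2 == d23) = false) * ((e2 == d24) = false) *
  ((e3 == d13) = false) * ((e3 == d14) = false) * ((e3 == d23) = false) * ((e3 == d24) = false) *
  ((e4 == d13) = false) * ((e4 == d14) = false) * ((e4 == d23) = false) * ((e4 == d24) = false) *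
  ((e1 == e2) = false) * ((e2 == e1) = false) * ((e3 == e4) = false) * ((e4 == e3) = false) *
  ((e1 == e) = false) * ((e2 == e) = false) * ((e3 == e) = false) * ((e4 == e) = false) *
  ((g3 == k1) = false) * ((g3 == k2) = false) * ((g4 == k1) = false) * ((g4 == k2) = false).
Proof.
have [_ Hg _ Hk [He1 He2 _ He3 He4]] := HV.
have [F1 F2 N12 Fu [Fl F3 F4 N34]] := HE.
have Ngk : gam != kap by apply/eqP => Egk; rewrite Egk Hk in Hg.
have neq_end (h : flow -> nat -> option nat) x y vx vy :
    h A x = Some vx -> h A y = Some vy -> vx != vy -> x != y.
  by move=> Hx Hy; apply: contraNneq => Exy; rewrite -Exy Hx in Hy; case: Hy => ->.
have N1 : e1 != e by apply: neq_end F1 Fl Ngk.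
have N2 : e2 != e by apply: neq_end F2 Fl Ngk.
have N3 : e3 != e by apply: neq_end F3 Fu _; rewrite eq_sym.
have N4 : e4 != e by apply: neq_end F4 Fu _; rewrite eq_sym.
have neq_d x : x \in fE A -> x != e -> [&& x != d13, x != d14, x != d23 & x != d24].
  move=> Hx Nx; rewrite -!negb_or; apply: contra Nx => Hd.
  by have := @new_edge_removed _ _ _ _ _ _ AB x; rewrite !inE Hd Hx; apply.
have [_ /= Ud _ _ _] := AB; have [/= Uv _ _ _ _] := AB.
move: Ud Uv; rewrite !inE !negb_or.
move=> /and4P[/and3P[D12 D13 D14] /andP[D23 D24] D34 _].
move=> /and4P[/and3P[_ V13 V14] /andP[V23 V24] _ _].
have /and4P[E11 E12 E13 E14] := neq_d _ He1 N1; have /and4P[E21 E22 E23 E24] := neq_d _ He2 N2.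
have /and4P[E31 E32 E33 E34] := neq_d _ He3 N3; have /and4P[E41 E42 E43 E44] := neq_d _ He4 N4.
by do !split; apply/negbTE; first [done | rewrite eq_sym].
Qed.

Lemma tgt_B_c3 p : p.1 \in fE B -> tgt B p =
  if p.2 then
    if p.1 == d13 then Some g3 else if p.1 == d14 then Some g4
    else if p.1 == d23 then Some g3 else if p.1 == d24 then Some g4
    else if p.1 == e1 then Some k1 else if p.1 == e2 then Some k2 else flo A p.1
  else
    if p.1 == d13 then Some k1 else if p.1 == d14 then Some k1
    else if p.1 == d23 then Some k2 else if p.1 == d24 then Some k2
    else if p.1 == e3 then Some g3 else if p.1 == e4 then Some g4 else fup A p.1.
Proof. by case: p => x [] /HB[]. Qed.

Lemma edges_B_c3 :
  [/\ e1 \in fE B, e2 \in fE B, e3 \in fE B, e4 \in fE B &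
      [/\ d13 \in fE B, d14 \in fE B, d23 \in fE B & d24 \in fE B]].
Proof.
have [_ _ _ _ [He1 He2 _ He3 He4]] := HV.
by rewrite !(mem_fE_frame AB) !inE He1 He2 He3 He4 !neq_c3 !eqxx !orbT.
Qed.

Lemma news_tgt_c3 w D p : (w, D) \in news_c3 -> p \in D ->
  [/\ p.1 \in fE B, tgt B p = Some w, (dmap_c3 p).1 \in fE A &
      tgt A (dmap_c3 p) = Some (vmap_c3 w)].
Proof.
have [_ _ _ _ [He1 He2 He He3 He4]] := HV; have [F1 F2 _ _ [_ F3 F4 _]] := HE.
have [B1 B2 B3 B4 [B13 B14 B23 B24]] := edges_B_c3.
rewrite !inE => /or4P[] /eqP[-> ->]; rewrite !inE => /or3P[] /eqP->; split;
  by rewrite ?tgt_B_c3 /dmap_c3 /vmap_c3 //= ?inE ?eqxx ?neq_c3 ?orbT ?tgt_e_c3.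
Qed.

Lemma news_arity_c3 w D : (w, D) \in news_c3 -> uniq D /\ dart_arity D = arity (feta B w).
Proof.
have [L1 L2 L3 L4] := HL.
rewrite !inE => /or4P[] /eqP[-> ->];
  by rewrite ?L1 ?L2 ?L3 ?L4 /dart_arity /= !inE !xpair_eqE ?neq_c3 ?andbF.
Qed.

Lemma news_turn_c3 w D p p' : (w, D) \in news_c3 -> p \in D -> p' \in D ->
  turn_at B w p (flip p') -> turn_at A (vmap_c3 w) (dmap_c3 p) (dmap_c3 (flip p')).
Proof.
have [L1 L2 L3 L4] := HL; have snd_dmap q : (dmap_c3 q).2 = q.2 by rewrite /dmap_c3; case: ifP.
move=> HwD _ _; have Nw : ic_kind (feta B w) = false.
  by move: HwD; rewrite !inE => /or4P[] /eqP[-> _]; rewrite ?L1 ?L2 ?L3 ?L4.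
by rewrite /turn_at Nw andbF orbF !snd_dmap => ->.
Qed.

Lemma unredirected_c3 p : p.1 \in fE B -> ~~ redirected news_c3 p ->
  [/\ p.1 \in fE A, p.1 \notin [:: e], dmap_c3 p = p & tgt B p = tgt A p].
Proof.
case: p => x b /= HxB Hu.
have Hd : (x \in [:: d13; d14; d23; d24]) = false.
  by apply: (contraNF _ Hu); rewrite !inE => /or4P[] /eqP->; case: (b);
    rewrite ?inE eqxx ?orbT.
move: Hd (HxB); rewrite (mem_fE_frame AB) => Hd; rewrite Hd orbF => /andP[-> ->].
split=> //; first by rewrite /dmap_c3 /= Hd.
move: Hd; rewrite !inE => /negbT; rewrite !negb_or.
move=> /and4P[/negbTE n1 /negbTE n2 /negbTE n3 /negbTE n4].
rewrite tgt_B_c3 //= n1 n2 n3 n4; case: b Hu => Hu.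
  have [n5 n6] : (x == e1) = false /\ (x == e2) = false.
    by split; apply: (contraNF _ Hu) => /eqP->; rewrite /redirected /= !inE eqxx ?orbT.
  by rewrite n5 n6.
have [n5 n6] : (x == e3) = false /\ (x == e4) = false.
  by split; apply: (contraNF _ Hu) => /eqP->; rewrite /redirected /= !inE eqxx ?orbT.
by rewrite n5 n6.
Qed.

Lemma tgt_removed_c3 p r : p.1 \in fE A -> tgt A p = Some r -> r \in [:: gam; kap] ->
  redirected news_c3 p || (p.1 \in [:: e]).
Proof.
have [Hg Lg Hk Lk [He1 He2 He He3 He4]] := HV; have [F1 F2 _ Fu [Fl F3 F4 _]] := HE.
move=> Hp Hr; rewrite !inE => /orP[] /eqP Er; subst r.
  have : p \in [:: (e1, true); (e2, true); (e, false)].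
    apply: arity_correct_tgt arA Hg _ _ _ p Hp Hr.
    - by rewrite /= !inE !xpair_eqE ?neq_c3 ?andbF.
    - by rewrite Lg.
    - by move=> q; rewrite !inE => /or3P[] /eqP->.
  by rewrite !inE => /or3P[] /eqP->; rewrite /redirected /= !inE ?eqxx ?orbT.
have : p \in [:: (e, true); (e3, false); (e4, false)].
  apply: arity_correct_tgt arA Hk _ _ _ p Hp Hr.
  - by rewrite /= !inE !xpair_eqE ?neq_c3 ?andbF.
  - by rewrite Lk.
  - by move=> q; rewrite !inE => /or3P[] /eqP->.
by rewrite !inE => /or3P[] /eqP->; rewrite /redirected /= !inE ?eqxx ?orbT.
Qed.

Lemma redirected_tgt_c3 p : p.1 \in fE A -> redirected news_c3 p || (p.1 \in [:: e]) ->
  exists2 r, r \in [:: gam; kap] & tgt A p = Some r.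
Proof.
have [F1 F2 _ _ [_ F3 F4 _]] := HE.
have tgt_e b : exists2 r, r \in [:: gam; kap] & tgt A (e, b) = Some r.
  by rewrite tgt_e_c3; case: b; [exists kap|exists gam]; rewrite ?inE ?eqxx ?orbT.
have new_e y b : y \in [:: d13; d14; d23; d24] -> y \in fE A ->
    exists2 r, r \in [:: gam; kap] & tgt A (y, b) = Some r.
  by move=> Hy /(new_edge_removed AB Hy); rewrite inE => /eqP->.
case: p => x b Hx /orP[/hasP[[w D] HwD HxD]|]; last by rewrite inE /= => /eqP->.
move: HwD HxD Hx; rewrite !inE => /or4P[] /eqP[_ ->]; rewrite !inE.
- by case/or3P=> /eqP[-> ->] Hx; [exists gam | apply: new_e..]; rewrite ?inE ?eqxx ?orbT.
- by case/or3P=> /eqP[-> ->] Hx; [exists gam | apply: new_e..]; rewrite ?inE ?eqxx ?orbT.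
- by case/or3P=> /eqP[-> ->] Hx; [apply: new_e.. | exists kap]; rewrite ?inE ?eqxx ?orbT.
- by case/or3P=> /eqP[-> ->] Hx; [apply: new_e.. | exists kap]; rewrite ?inE ?eqxx ?orbT.
Qed.

Lemma vmap_old_c3 v : v \notin [:: k1; k2; g3; g4] -> vmap_c3 v = v.
Proof. by rewrite !inE !negb_or /vmap_c3 => /and4P[/negbTE-> /negbTE-> /negbTE-> /negbTE->]. Qed.

Lemma dmap_flip_c3 p : dmap_c3 (flip p) = flip (dmap_c3 p).
Proof. by rewrite /dmap_c3 /=; case: ifP. Qed.

Lemma c3_correct : arity_correct B /\ (cycle_free A -> cycle_free B).
Proof.
exact: (replace_correct (news := news_c3) AB arA (erefl _) vmap_old_c3 dmap_flip_c3
  news_tgt_c3 news_arity_c3 news_turn_c3 unredirected_c3 tgt_removed_c3 redirected_tgt_c3).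
Qed.

End StepC3.

Lemma step_c3_correct A B : step_c3 A B -> arity_correct A ->
  arity_correct B /\ (cycle_free A -> cycle_free B).
Proof.
case=> gam [kap [e1 [e2 [e [e3 [e4 [k1 [k2 [g3 [g4 [d13 [d14 [d23 [d24
  [HV [HE [AB [HL HB]]]]]]]]]]]]]]]]]] arA.
exact: c3_correct arA HV HE AB HL HB.
Qed.

Lemma frame_dual A B rV rV' rE nV nE : rV =i rV' ->
  frame A B rV rE nV nE -> frame (dual A) (dual B) rV' rE nV nE.
Proof.
move=> ErV [U1 U2 H3 H4 [U5 U6 H7 H8 H9]]; split=> //=.
  by apply: sub_all H3 => v; rewrite ErV.
split=> //= v; first by rewrite H7 ErV.
by rewrite -ErV => Hv Hr; rewrite H9.
Qed.

Lemma step_c2_dual A B : step_c2 A B -> step_c1 (dual A) (dual B).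
Proof.
case=> iota [kap [e3 [e4 [e1 [e2 [gam [i1 [i2 [d1 [d2 [HV [HE [AB [HL HB]]]]]]]]]]]]]].
exists kap, iota, e1, e2, e4, e3, gam, i1, i2, d1, d2.
have [Hi Li Hk Lk [He1 He2 He3 He4 N34]] := HV; have [F3 F4 F4' F1 [F2 N12]] := HE.
have [Lg L1 L2] := HL.
split; first by rewrite /= Li Lk.
split; first by [].
split; first by apply: frame_dual AB => v; rewrite !inE orbC.
split; first by rewrite /= Lg L1 L2.
by move=> x /HB[].
Qed.

Lemma step_c_correct A B : step_c A B -> arity_correct A -> cycle_free A ->
  arity_correct B /\ cycle_free B.
Proof.
move=> St arA CA; case: St => [|[]] St.
- by have [arB CB] := step_c1_correct St arA; split; last exact: CB.
- have [arB CB] := step_c1_correct (step_c2_dual St) (arity_correct_dual_pair (dual_pairD A) arA).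
  split; first exact: arity_correct_dual_pair (dual_pairDV B) arB.
  apply: cycle_free_dual_pair (dual_pairDV B) (proj1 arB) (CB _).
  exact: cycle_free_dual_pair (dual_pairD A) (proj1 arA) CA.
- by have [arB CB] := step_c3_correct St arA; split; last exact: CB.
Qed.

Theorem proposition4p17 (A B : flow) :
  is_flow A -> cycle_free A -> steps_c A B -> cycle_free B.
Proof.
move=> /is_flow_arity_correct arA CA AB.
elim: AB arA CA => // {}A {}B C St _ IH arA CA.
have [arB CB] := step_c_correct St arA CA.
exact: IH arB CB.
Qed.
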